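(* Let $\Theta$ be an open saturated branch of a tableau in $\mathbf{TAB}_{\mathbf{IB}}$ with root formula $@_{i_0}\varphi_0$, let $\mathcal{M}^\Theta=(W^\Theta,R^\Theta,V^\Theta)$ be its model, $W^\Theta_r=\{w\in W^\Theta\mid wR^\Theta w\}$, and $\mathcal{M}^\Theta_B$ the bulldozed model of $\mathcal{M}^\Theta$. For every nominal $i\in W^\Theta_r$ and every formula $\varphi$ such that $@_i\varphi$ is a quasi-subformula of $@_{i_0}\varphi_0$, we have $\mathcal{M}^\Theta_B,(i,0)\models\varphi$ if and only if $\mathcal{M}^\Theta_B,(i,1)\models\varphi$.
   Context: Hybrid language: fix disjoint countably infinite sets $\mathbf{Prop}$ (propositional variables) and $\mathbf{Nom}$ (nominals). Formulas: $\varphi ::= p \mid i \mid \neg\varphi \mid \varphi\land\varphi \mid \Diamond\varphi \mid @_i\varphi$ with $p\in\mathbf{Prop}$, $i\in\mathbf{Nom}$; $\Box\varphi$ abbreviates $\neg\Diamond\neg\varphi$. A model $\mathcal{M}=(W,R,V)$ has $W$ nonempty, $R\subseteq W\times W$, and $V:\mathbf{Prop}\cup\mathbf{Nom}\to\mathcal{P}(W)$ with $V(i)=\{i^V\}$ a singleton for each nominal $i$. Satisfaction: $\mathcal{M},w\models p$ iff $w\in V(p)$; $\mathcal{M},w\models i$ iff $w=i^V$; Boolean clauses as usual; $\mathcal{M},w\models\Diamond\varphi$ iff there is $v$ with $wRv$ and $\mathcal{M},v\models\varphi$; $\mathcal{M},w\models @_i\varphi$ iff $\mathcal{M},i^V\models\varphi$.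 Tableau calculus $\mathbf{TAB}_{\mathbf{IB}}$. A tableau is a well-founded tree whose nodes are formulas of the form $@_i\varphi$; its root is a formula $@_i\varphi$ (the root formula) where $i$ does not occur in $\varphi$. A branch is a maximal path; $\varphi\in\Theta$ means $\varphi$ occurs on branch $\Theta$. Each branch is extended by applying the rules below to its formulas as often as possible, except that no further formula is added to a branch once either (i) every new formula generated by applying any rule already occurs on the branch, or (ii) the branch is closed, i.e. contains $@_i\varphi$ and $@_i\neg\varphi$ for some formula $\varphi$ and nominal $i$. Open means not closed. A branch is saturated if every new formula generated by applying some rule already occurs on it. An accessibility formula is a formula $@_i\Diamond j$ added by rule $[\Diamond]$ (with $j$ the new nominal). Rules (premises already on the branch; conclusions added to it): [$\neg\neg$] from $@_i\neg\neg\varphi$ add $@_i\varphi$; [$\land$] from $@_i(\varphi\land\psi)$ add $@_i\varphi$ and $@_i\psi$; [$\neg\land$] from $@_i\neg(\varphi\land\psi)$ split the branch into one extended by $@_i\neg\varphi$ and one extended by $@_i\neg\psi$; [$\Diamond$] from $@_i\Diamond\varphi$, which is not an accessibility formula, add $@_i\Diamond j$ and $@_j\varphi$ where $j$ is a nominal not occurring on the branch; this rule is applied at most once per formula, and only if $i$ is a quasi-urfather on the branch (defined below); [$\neg\Diamond$] from $@_i\neg\Diamond\varphi$ and $@_i\Diamond j$ add $@_j\neg\varphi$; [$\Box_{sym}$] from $@_i\Box\varphi$ and $@_j\Diamond i$ add $@_j\varphi$; [$@$] from $@_i@_j\varphi$ add $@_j\varphi$; [$\neg@$] from $@_i\neg@_j\varphi$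 add $@_j\neg\varphi$; [$Id$] from $@_i\varphi$, which is not an accessibility formula, and $@_i j$ add $@_j\varphi$; [$Ref$] for any nominal $i$ occurring on the branch add $@_i i$; ($\mathcal{I}$) for any nominal $i$ occurring on the branch add $@_i\neg\Diamond i$. Auxiliary notions for a branch $\Theta$. $@_i\varphi$ is a quasi-subformula of $@_j\psi$ if $\varphi$ is a subformula of $\psi$, or $\varphi=\neg\chi$ with $\chi$ a subformula of $\psi$. For a nominal $i$ occurring in $\Theta$, $T^\Theta(i)=\{\varphi \mid @_i\varphi\in\Theta$ and $@_i\varphi$ is a quasi-subformula of the root formula$\}$. Nominals $i,j$ are twins if $T^\Theta(i)=T^\Theta(j)$. $i\prec_\Theta j$ if $j$ was introduced by applying $[\Diamond]$ to a formula $@_i\Diamond\varphi$; $\prec_\Theta^*$ is its reflexive transitive closure. A nominal $i$ is a quasi-urfather on $\Theta$ if there are no twins $j\neq k$ with $j\prec_\Theta^* i$ and $k\prec_\Theta^* i$. The identity urfather $v_\Theta(i)$ of a nominal $i$ occurring in $\Theta$ is the earliest introduced nominal $j$ on $\Theta$ such that $j$ is a twin of $i$ and $j$ is a quasi-urfather; it may fail to exist, and $\mathrm{dom}(v_\Theta)$ denotes the set of nominals for which it exists. A nominal is called an identity urfather on $\Theta$ if it is the identity urfather of some nominal (equivalently $v_\Theta(i)=i$). The model $\mathcal{M}^\Theta=(W^\Theta,R^\Theta,V^\Theta)$ of an open saturated branch $\Theta$ with root formula $@_{i_0}\varphi_0$: $W^\Theta$ is the set of identity urfathers on $\Theta$;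 $R^\Theta=\{(v_\Theta(i),v_\Theta(j)) \mid @_i\Diamond j\in\Theta,\ i,j\in\mathrm{dom}(v_\Theta)\}\cup\{(v_\Theta(j),v_\Theta(i)) \mid @_i\Diamond j\in\Theta,\ i,j\in\mathrm{dom}(v_\Theta)\}$; $V^\Theta(p)=\{v_\Theta(i)\mid @_i p\in\Theta\}$ for $p\in\mathbf{Prop}$; for a nominal $i$, $V^\Theta(i)=\{v_\Theta(i)\}$ if $i\in\mathrm{dom}(v_\Theta)$ and $V^\Theta(i)=\{i_0\}$ otherwise. Bulldozed model: given a model $\mathcal{M}=(W,R,V)$, let $W_r=\{w\in W\mid wRw\}$, $W^-=W\setminus W_r$, and $W_B=W^-\cup\{(w,n)\mid w\in W_r,\ n\in\{0,1\}\}$. Let $\alpha:W_B\to W$ be $\alpha(w)=w$ for $w\in W^-$ and $\alpha((w,n))=w$. Define $wR_Bv$ iff one of: ($w\in W^-$ or $v\in W^-$) and $\alpha(w)R\alpha(v)$; or $w=(w',m)$, $v=(v',n)$, $w'\neq v'$ and $w'Rv'$; or $w\neq v$ and $\alpha(w)=\alpha(v)$. Define $V_B(p)=\{w\in W_B\mid\alpha(w)\in V(p)\}$ for $p\in\mathbf{Prop}$; for a nominal $i$, $V_B(i)=\{(i^V,0)\}$ if $i^V\in W_r$, and $V_B(i)=V(i)$ otherwise. The bulldozed model is $\mathcal{M}_B=(W_B,R_B,V_B)$; $\mathcal{M}^\Theta_B$ denotes the bulldozed model of $\mathcal{M}^\Theta$. *)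

From Stdlib Require Import List Arith Relations.
Import ListNotations.

(* Prop = nat, Nom = nat (two disjoint countably infinite sets, kept apart by
   the constructors). *)
Inductive form : Type :=
| PVar : nat -> form
| Nom  : nat -> form
| Neg  : form -> form
| And  : form -> form -> form
| Dia  : form -> form
| At   : nat -> form -> form.

Definition Box (f : form) : form := Neg (Dia (Neg f)).

Fixpoint noms (f : form) : list nat :=
  match f with
  | PVar _ => []
  | Nom i => [i]
  | Neg a => noms a
  | And a b => noms a ++ noms b
  | Dia a => noms a
  | At i a => i :: noms a
  end.

Inductive subf : form -> form -> Prop :=
| subf_refl a : subf a a
| subf_neg a b : subf a b -> subf a (Neg b)
| subf_andl a b c : subf a b -> subf a (And b c)
| subf_andr a b c : subf a c -> subf a (And b c)
| subf_dia a b : subf a b -> subf a (Dia b)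
| subf_at a i b : subf a b -> subf a (At i b).

(* @_i phi is a quasi-subformula of the root @_{i0} phi0 *)
Definition qsub (phi0 phi : form) : Prop :=
  subf phi phi0 \/ exists chi, phi = Neg chi /\ subf chi phi0.

(* The valuation of a nominal is given as a set Vn i (in the paper a
   singleton {i^V}); @_i phi holds iff phi holds at the (unique) element
   of V(i). *)
Record model : Type := Model {
  W  : Type;
  R  : W -> W -> Prop;
  Vp : nat -> W -> Prop;
  Vn : nat -> W -> Prop }.

Fixpoint sat (M : model) (w : W M) (f : form) : Prop :=
  match f with
  | PVar p => Vp M p w
  | Nom i => Vn M i w
  | Neg a => ~ sat M w a
  | And a b => sat M w a /\ sat M w b
  | Dia a => exists v, R M w v /\ sat M v a
  | At i a => exists v, Vn M i v /\ sat M v a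
  end.

(* W_B = W^- (tag None) together with W_r x {0,1} (tag Some false = 0,
   Some true = 1). *)
Definition WB (M : model) : Type :=
  { x : W M * option bool |
    match snd x with
    | None => ~ R M (fst x) (fst x)
    | Some _ => R M (fst x) (fst x)
    end }.

Definition alpha (M : model) (x : WB M) : W M := fst (proj1_sig x).
Definition tagB (M : model) (x : WB M) : option bool := snd (proj1_sig x).

Definition RB (M : model) (x y : WB M) : Prop :=
  ((tagB M x = None \/ tagB M y = None) /\ R M (alpha M x) (alpha M y))
  \/ (exists m n, tagB M x = Some m /\ tagB M y = Some n /\
        alpha M x <> alpha M y /\ R M (alpha M x) (alpha M y))
  \/ (x <> y /\ alpha M x = alpha M y).

Definition VpB (M : model) (p : nat) (x : WB M) : Prop := Vp M p (alpha M x).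

Definition VnB (M : model) (i : nat) (x : WB M) : Prop :=
  (exists u, Vn M i u /\ R M u u /\ proj1_sig x = (u, Some false))
  \/ (exists u, Vn M i u /\ ~ R M u u /\ proj1_sig x = (u, None)).

Definition bulldoze (M : model) : model :=
  Model (WB M) (RB M) (VpB M) (VnB M).

(* a node (i, phi) stands for the formula @_i phi *)
Definition node := (nat * form)%type.

(* state of a branch: the formulas in order of addition, and the log of
   [Dia] applications (i, phi, j): [Dia] applied to @_i Dia phi introduced j *)
Record state : Type := State { nodes : list node; dlog : list (nat * form * nat) }.

Definition noms_node (n : node) : list nat := fst n :: noms (snd n).

Definition occurs (s : state) (i : nat) : Prop :=
  exists n, In n (nodes s) /\ In i (noms_node n).

(* accessibility formulas: the @_i Dia j added by rule [Dia] *)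
Definition acc (s : state) (n : node) : Prop :=
  exists phi j, In (fst n, phi, j) (dlog s) /\ snd n = Dia (Nom j).

Definition closed (s : state) : Prop :=
  exists i phi, In (i, phi) (nodes s) /\ In (i, Neg phi) (nodes s).

Definition T (phi0 : form) (s : state) (i : nat) (phi : form) : Prop :=
  In (i, phi) (nodes s) /\ qsub phi0 phi.

Definition twins (phi0 : form) (s : state) (j k : nat) : Prop :=
  occurs s j /\ occurs s k /\ (forall phi, T phi0 s j phi <-> T phi0 s k phi).

Definition prec (s : state) (i j : nat) : Prop := exists phi, In (i, phi, j) (dlog s).
Definition prec_star (s : state) : nat -> nat -> Prop := clos_refl_trans nat (prec s).

Definition quasi_urfather (phi0 : form) (s : state) (i : nat) : Prop :=
  ~ exists j k, j <> k /\ twins phi0 s j k /\ prec_star s j i /\ prec_star s k i.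

(* order of introduction of nominals: position of first occurrence in the
   sequence of nominals of the branch (nodes in order, each node listing its
   outer nominal first and then its nominals left to right) *)
Definition nomseq (s : state) : list nat := flat_map noms_node (nodes s).

Definition first_idx (l : list nat) (x : nat) (n : nat) : Prop :=
  nth_error l n = Some x /\ forall m, m < n -> nth_error l m <> Some x.

Definition introduced_no_later (s : state) (j k : nat) : Prop :=
  exists a b, first_idx (nomseq s) j a /\ first_idx (nomseq s) k b /\ a <= b.

Definition idurf_of (phi0 : form) (s : state) (i j : nat) : Prop :=
  occurs s i /\ twins phi0 s i j /\ quasi_urfather phi0 s j /\
  forall k, twins phi0 s i k -> quasi_urfather phi0 s k -> introduced_no_later s j k.

Definition is_idurf (phi0 : form) (s : state) (j : nat) : Prop :=
  exists i, idurf_of phi0 s i j.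

(* rule instances other than [Dia]: a list of alternatives, each alternative
   being the list of formulas added *)
Inductive gen (s : state) : list (list node) -> Prop :=
| g_negneg i phi : In (i, Neg (Neg phi)) (nodes s) -> gen s [[(i, phi)]]
| g_and i phi psi : In (i, And phi psi) (nodes s) -> gen s [[(i, phi); (i, psi)]]
| g_negand i phi psi : In (i, Neg (And phi psi)) (nodes s) ->
    gen s [[(i, Neg phi)]; [(i, Neg psi)]]
| g_negdia i j phi : In (i, Neg (Dia phi)) (nodes s) -> In (i, Dia (Nom j)) (nodes s) ->
    gen s [[(j, Neg phi)]]
| g_boxsym i j phi : In (i, Box phi) (nodes s) -> In (j, Dia (Nom i)) (nodes s) ->
    gen s [[(j, phi)]]
| g_at i j phi : In (i, At j phi) (nodes s) -> gen s [[(j, phi)]]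
| g_negat i j phi : In (i, Neg (At j phi)) (nodes s) -> gen s [[(j, Neg phi)]]
| g_id i j phi : In (i, phi) (nodes s) -> ~ acc s (i, phi) -> In (i, Nom j) (nodes s) ->
    gen s [[(j, phi)]]
| g_ref i : occurs s i -> gen s [[(i, Nom i)]]
| g_irr i : occurs s i -> gen s [[(i, Neg (Dia (Nom i)))]].

Definition dia_applicable (phi0 : form) (s : state) (i : nat) (phi : form) : Prop :=
  In (i, Dia phi) (nodes s) /\ ~ acc s (i, Dia phi) /\
  ~ (exists j, In (i, phi, j) (dlog s)) /\ quasi_urfather phi0 s i.

Definition saturated (phi0 : form) (s : state) : Prop :=
  (forall alts, gen s alts ->
     exists alt, In alt alts /\ forall n, In n alt -> In n (nodes s))
  /\ (forall i phi, ~ dia_applicable phi0 s i phi).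

Inductive step (phi0 : form) (s : state) : state -> Prop :=
| st_gen alts alt : gen s alts -> In alt alts ->
    step phi0 s (State (nodes s ++ alt) (dlog s))
| st_dia i phi j : dia_applicable phi0 s i phi -> ~ occurs s j ->
    step phi0 s (State (nodes s ++ [(i, Dia (Nom j)); (j, phi)])
                       (dlog s ++ [(i, phi, j)])).

(* branches of a TAB_IB tableau with root @_{i0} phi0 (built step by step;
   no formula is added to a closed or saturated branch) *)
Inductive reach (i0 : nat) (phi0 : form) : state -> Prop :=
| r_root : ~ In i0 (noms phi0) -> reach i0 phi0 (State [(i0, phi0)] [])
| r_step s s' : reach i0 phi0 s -> ~ closed s -> ~ saturated phi0 s ->
    step phi0 s s' -> reach i0 phi0 s'.

Definition open_saturated_branch (i0 : nat) (phi0 : form) (s : state) : Prop :=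
  reach i0 phi0 s /\ ~ closed s /\ saturated phi0 s.

Definition WTh (phi0 : form) (s : state) : Type := { j : nat | is_idurf phi0 s j }.

Definition RTh (phi0 : form) (s : state) (w u : WTh phi0 s) : Prop :=
  (exists i j, In (i, Dia (Nom j)) (nodes s) /\
     idurf_of phi0 s i (proj1_sig w) /\ idurf_of phi0 s j (proj1_sig u))
  \/ (exists i j, In (i, Dia (Nom j)) (nodes s) /\
     idurf_of phi0 s j (proj1_sig w) /\ idurf_of phi0 s i (proj1_sig u)).

Definition VpTh (phi0 : form) (s : state) (p : nat) (w : WTh phi0 s) : Prop :=
  exists i, In (i, PVar p) (nodes s) /\ idurf_of phi0 s i (proj1_sig w).

Definition VnTh (i0 : nat) (phi0 : form) (s : state) (i : nat) (w : WTh phi0 s) : Prop :=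
  idurf_of phi0 s i (proj1_sig w)
  \/ ((~ exists j, idurf_of phi0 s i j) /\ proj1_sig w = i0).

Definition MTheta (i0 : nat) (phi0 : form) (s : state) : model :=
  Model (WTh phi0 s) (RTh phi0 s) (VpTh phi0 s) (VnTh i0 phi0 s).

(* Two copies (w,0) and (w,1) of a reflexive point of a bulldozed model see
   each other and have the same successors otherwise, so no formula tells them
   apart unless it mentions a nominal true at (w,0), i.e. a nominal whose
   value in the original model is w.  For the branch model this cannot happen
   for a nominal k of the root: k has an identity urfather, and if that
   urfather w were reflexive there would be an accessibility formula @_a Dia b
   with a, b twins of k, so @_a k and @_b k are on the branch, and the rules
   [Ref], [Id], (I) and [Neg Dia] then produce @_b (Neg k), closing it. *)
From Stdlib Require Import List Arith Relations Wf_nat Classical.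
Import ListNotations.

Definition exchangeable (M : model) (x y : W M) : Prop :=
  R M x y /\ R M y x /\
  (forall v, v <> x -> v <> y -> (R M x v <-> R M y v)) /\
  (forall p, Vp M p x <-> Vp M p y).

Lemma exchangeable_sym (M : model) (x y : W M) :
  exchangeable M x y -> exchangeable M y x.
Proof.
  intros [Rxy [Ryx [Rout Vxy]]]; split; [exact Ryx | split; [exact Rxy | split]].
  - intros v Hy Hx; symmetry; auto.
  - intro p; symmetry; auto.
Qed.

Lemma sat_Dia_exchangeable (M : model) (x y : W M) (a : form) :
  exchangeable M x y -> (sat M x a <-> sat M y a) ->
  sat M x (Dia a) -> sat M y (Dia a).
Proof.
  intros [_ [Ryx [Rout _]]] IH [v [Rxv Hv]].
  destruct (classic (v = x \/ v = y)) as [[-> | ->] | Hout].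
  - exists x; auto.
  - exists x; split; [exact Ryx | apply IH; exact Hv].
  - exists v; split; [apply Rout; tauto | exact Hv].
Qed.

Lemma sat_exchangeable (M : model) (x y : W M) (phi : form) :
  exchangeable M x y ->
  (forall k, subf (Nom k) phi -> (Vn M k x <-> Vn M k y)) ->
  (sat M x phi <-> sat M y phi).
Proof.
  intros Hxy.
  induction phi as [p | k | a IH | a IHa b IHb | a IH | j a IH]; intros Hk; simpl.
  - apply Hxy.
  - apply Hk, subf_refl.
  - rewrite (IH (fun k h => Hk k (subf_neg _ _ h))); tauto.
  - rewrite (IHa (fun k h => Hk k (subf_andl _ _ _ h))),
            (IHb (fun k h => Hk k (subf_andr _ _ _ h))); tauto.
  - specialize (IH (fun k h => Hk k (subf_dia _ _ h))).
    split; apply sat_Dia_exchangeable; auto using exchangeable_sym.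
    symmetry; exact IH.
  - tauto.
Qed.

Section BulldozedCopies.

Variables (M : model) (w : W M) (Hr : R M w w).

Let x0 : W (bulldoze M) := exist _ (w, Some false) Hr.
Let x1 : W (bulldoze M) := exist _ (w, Some true) Hr.

Lemma bulldozed_copies_exchangeable : exchangeable (bulldoze M) x0 x1.
Proof.
  assert (Hne : x0 <> x1) by (intro E; inversion E).
  split; [| split; [| split]]; simpl; unfold RB.
  - right; right; auto.
  - right; right; auto.
  - intros v Hv0 Hv1; split.
    + intros [[[Hn | Hn] HR] | [[m [n [_ [Hn HR]]]] | Hid]]; [discriminate | | |].
      * left; auto.
      * right; left; exists true, n; auto.
      * right; right; split; [auto | apply Hid].
    + intros [[[Hn | Hn] HR] | [[m [n [_ [Hn HR]]]] | Hid]]; [discriminate | | |].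
      * left; auto.
      * right; left; exists false, n; auto.
      * right; right; split; [auto | apply Hid].
  - reflexivity.
Qed.

Lemma VnB_copies (k : nat) : ~ Vn M k w -> ~ VnB M k x0 /\ ~ VnB M k x1.
Proof.
  intros Hk; unfold VnB; simpl; split.
  - intros [[u [Hu [_ E]]] | [u [_ [_ E]]]]; inversion E; subst; auto.
  - intros [[u [_ [_ E]]] | [u [_ [_ E]]]]; discriminate.
Qed.

Lemma sat_bulldozed_copies (phi : form) :
  (forall k, subf (Nom k) phi -> ~ Vn M k w) ->
  (sat (bulldoze M) x0 phi <-> sat (bulldoze M) x1 phi).
Proof.
  intros Hk; apply sat_exchangeable; [exact bulldozed_copies_exchangeable |].
  intros k Hsub; destruct (VnB_copies k (Hk k Hsub)); simpl; tauto.
Qed.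

End BulldozedCopies.

Lemma subf_trans (a b c : form) : subf a b -> subf b c -> subf a c.
Proof. intros Hab Hbc; induction Hbc; auto using subf. Qed.

Lemma subf_Nom_noms (k : nat) (a : form) : subf (Nom k) a -> In k (noms a).
Proof.
  remember (Nom k) as n eqn:E; induction 1; subst; simpl; auto using in_or_app.
Qed.

Lemma qsub_subf_Nom (phi0 phi : form) (k : nat) :
  qsub phi0 phi -> subf (Nom k) phi -> subf (Nom k) phi0.
Proof.
  intros [Hphi | [chi [-> Hchi]]] Hk; eauto using subf_trans.
  inversion Hk; subst; eauto using subf_trans.
Qed.

Lemma least_nat_exists (P : nat -> Prop) :
  (exists n, P n) -> exists n, P n /\ forall m, P m -> n <= m.
Proof.
  intros Hex.
  destruct (dec_inh_nat_subset_has_unique_least_element P (fun n => classic (P n)) Hex)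
    as [n [Hn _]].
  exists n; exact Hn.
Qed.

Lemma first_idx_exists (l : list nat) (x : nat) : In x l -> exists n, first_idx l x n.
Proof.
  intros Hx; apply In_nth_error, least_nat_exists in Hx as [n [Hn Hleast]].
  exists n; split; [exact Hn |].
  intros m Hm E; specialize (Hleast m E); apply (Nat.lt_irrefl n), (Nat.le_lt_trans _ m); auto.
Qed.

Lemma earliest_exists (s : state) (S : nat -> Prop) :
  (forall j, S j -> occurs s j) -> (exists j, S j) ->
  exists j, S j /\ forall j', S j' -> introduced_no_later s j j'.
Proof.
  intros Hocc [j Sj].
  assert (Hidx : forall j, S j -> exists n, first_idx (nomseq s) j n).
  { intros j' Sj'; apply first_idx_exists.
    destruct (Hocc j' Sj') as [n [Hn Hj']]; apply in_flat_map; eauto. }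
  destruct (least_nat_exists (fun n => exists j, S j /\ first_idx (nomseq s) j n))
    as [n [[j0 [Sj0 Hj0]] Hleast]].
  { destruct (Hidx j Sj) as [n Hn]; eauto. }
  exists j0; split; [exact Sj0 |].
  intros j' Sj'; destruct (Hidx j' Sj') as [b Hb].
  exists n, b; split; [| split]; eauto.
Qed.

Lemma reach_root (i0 : nat) (phi0 : form) (s : state) :
  reach i0 phi0 s -> In (i0, phi0) (nodes s).
Proof.
  induction 1 as [| s s' _ IH _ _ Hstep]; [left; reflexivity |].
  destruct Hstep; apply in_or_app; auto.
Qed.

Lemma reach_dlog_fresh (i0 : nat) (phi0 : form) (s : state) :
  reach i0 phi0 s -> forall i phi j, In (i, phi, j) (dlog s) -> ~ In j (noms phi0).
Proof.
  intros Hs; induction Hs as [| s s' Hs IH _ _ Hstep]; [intros ? ? ? [] |].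
  destruct Hstep as [alts alt _ _ | i phi j _ Hfresh]; simpl; [exact IH |].
  intros i' phi' j' Hin; apply in_app_or in Hin as [Hin | [E | []]]; eauto.
  injection E as <- <- <-; intros Hj; apply Hfresh.
  exists (i0, phi0); split; [apply (reach_root i0 phi0 s Hs) | right; exact Hj].
Qed.

Lemma root_nom_occurs (i0 : nat) (phi0 : form) (s : state) (k : nat) :
  reach i0 phi0 s -> In k (noms phi0) -> occurs s k.
Proof.
  intros Hs Hk; exists (i0, phi0); split; [apply (reach_root i0 phi0 s Hs) | right; exact Hk].
Qed.

Lemma root_nom_quasi_urfather (i0 : nat) (phi0 : form) (s : state) (k : nat) :
  reach i0 phi0 s -> In k (noms phi0) -> quasi_urfather phi0 s k.
Proof.
  intros Hs Hk [j [j' [Hne [_ [Hj Hj']]]]].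
  assert (Hbelow : forall x, prec_star s x k -> x = k).
  { intros x Hx; apply clos_rt_rtn1 in Hx; inversion Hx as [| y z [p Hp]]; auto.
    exfalso; exact (reach_dlog_fresh i0 phi0 s Hs _ _ _ Hp Hk). }
  apply Hne; rewrite (Hbelow j Hj), (Hbelow j' Hj'); reflexivity.
Qed.

Lemma root_nom_has_idurf (i0 : nat) (phi0 : form) (s : state) (k : nat) :
  reach i0 phi0 s -> In k (noms phi0) -> exists j, idurf_of phi0 s k j.
Proof.
  intros Hs Hk.
  assert (Hocc : occurs s k) by exact (root_nom_occurs i0 phi0 s k Hs Hk).
  destruct (earliest_exists s (fun j => twins phi0 s k j /\ quasi_urfather phi0 s j))
    as [j [[Htw Hqu] Hearliest]].
  - intros j [[_ [Hj _]] _]; exact Hj.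
  - exists k; split; [split; [exact Hocc | split; [exact Hocc | tauto]] |].
    exact (root_nom_quasi_urfather i0 phi0 s k Hs Hk).
  - exists j; split; [exact Hocc | auto].
Qed.

Lemma saturated_single (phi0 : form) (s : state) (n : node) :
  saturated phi0 s -> gen s [[n]] -> In n (nodes s).
Proof.
  intros [Hgen _] Hg; destruct (Hgen _ Hg) as [alt [[<- | []] Halt]].
  apply Halt; left; reflexivity.
Qed.

Lemma twins_sym (phi0 : form) (s : state) (a b : nat) :
  twins phi0 s a b -> twins phi0 s b a.
Proof. intros [Ha [Hb HT]]; split; [exact Hb | split; [exact Ha | intro; symmetry; apply HT]]. Qed.

Lemma twins_node (phi0 : form) (s : state) (a b : nat) (phi : form) :
  twins phi0 s a b -> qsub phi0 phi -> In (a, phi) (nodes s) -> In (b, phi) (nodes s).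
Proof. intros [_ [_ HT]] Hq Ha; apply HT; split; assumption. Qed.

Lemma saturated_closed_of_Nom_loop (phi0 : form) (s : state) (a b k : nat) :
  saturated phi0 s -> In (a, Dia (Nom b)) (nodes s) ->
  In (a, Nom k) (nodes s) -> In (b, Nom k) (nodes s) -> closed s.
Proof.
  intros Hsat Hab Hak Hbk.
  assert (Hnot_acc : forall i phi, (forall j, phi <> Dia (Nom j)) -> ~ acc s (i, phi)).
  { intros i phi Hphi [psi [j [_ E]]]; exact (Hphi j E). }
  assert (Haa : In (a, Nom a) (nodes s)).
  { apply (saturated_single phi0), g_ref; auto.
    exists (a, Dia (Nom b)); split; [exact Hab | left; reflexivity]. }
  assert (Hka : In (k, Nom a) (nodes s)).
  { apply (saturated_single phi0), (g_id s a); auto; apply Hnot_acc; discriminate. }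
  assert (Hk_irr : In (k, Neg (Dia (Nom k))) (nodes s)).
  { apply (saturated_single phi0), g_irr; auto.
    exists (a, Nom k); split; [exact Hak | right; left; reflexivity]. }
  assert (Ha_irr : In (a, Neg (Dia (Nom k))) (nodes s)).
  { apply (saturated_single phi0), (g_id s k); auto; apply Hnot_acc; discriminate. }
  assert (Hb_neg : In (b, Neg (Nom k)) (nodes s)).
  { apply (saturated_single phi0); auto; eapply g_negdia; eauto. }
  exists b, (Nom k); auto.
Qed.

Lemma reflexive_idurf_not_root_nom (i0 : nat) (phi0 : form) (s : state)
    (w : W (MTheta i0 phi0 s)) (k : nat) :
  ~ closed s -> saturated phi0 s -> R (MTheta i0 phi0 s) w w ->
  subf (Nom k) phi0 -> ~ idurf_of phi0 s k (proj1_sig w).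
Proof.
  intros Hopen Hsat Hr Hk [Hocc [Htw _]].
  assert (Hq : qsub phi0 (Nom k)) by (left; exact Hk).
  assert (Hloop : exists a b, In (a, Dia (Nom b)) (nodes s) /\
                  idurf_of phi0 s a (proj1_sig w) /\ idurf_of phi0 s b (proj1_sig w)).
  { destruct Hr as [[a [b Hab]] | [a [b [Hd [Hb Ha]]]]]; exists a, b; auto. }
  destruct Hloop as [a [b [Hab [[_ [Ha _]] [_ [Hb _]]]]]].
  assert (Hwk : In (proj1_sig w, Nom k) (nodes s)).
  { apply (twins_node phi0 s k _ _ Htw Hq), (saturated_single phi0), g_ref; auto. }
  apply Hopen, (saturated_closed_of_Nom_loop phi0 s a b k Hsat Hab);
    eapply twins_node; eauto using twins_sym.
Qed.

Lemma VnTh_reflexive_root_nom (i0 : nat) (phi0 : form) (s : state)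
    (w : W (MTheta i0 phi0 s)) (k : nat) :
  open_saturated_branch i0 phi0 s -> R (MTheta i0 phi0 s) w w ->
  subf (Nom k) phi0 -> ~ Vn (MTheta i0 phi0 s) k w.
Proof.
  intros [Hs [Hopen Hsat]] Hr Hk [Hid | [Hnone _]].
  - exact (reflexive_idurf_not_root_nom i0 phi0 s w k Hopen Hsat Hr Hk Hid).
  - exact (Hnone (root_nom_has_idurf i0 phi0 s k Hs (subf_Nom_noms k phi0 Hk))).
Qed.

Theorem lemma12 (i0 : nat) (phi0 : form) (s : state) :
  open_saturated_branch i0 phi0 s ->
  forall (w : W (MTheta i0 phi0 s)) (Hr : R (MTheta i0 phi0 s) w w) (phi : form),
    qsub phi0 phi ->
    (sat (bulldoze (MTheta i0 phi0 s)) (exist _ (w, Some false) Hr) phi <->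
     sat (bulldoze (MTheta i0 phi0 s)) (exist _ (w, Some true) Hr) phi).
Proof.
  intros Hbranch w Hr phi Hq.
  apply sat_bulldozed_copies; intros k Hk.
  exact (VnTh_reflexive_root_nom i0 phi0 s w k Hbranch Hr (qsub_subf_Nom phi0 phi k Hq Hk)).
Qed.
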